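(* Let $k\ge 1$ be an integer, let $g,h$ be any two encoders and $\mathcal D$ any task distribution. With the $k$-negative losses defined below, $$L^{(k)}_{\mathrm{con}}(g;\mathcal D)\le \alpha L^{(k)}_{\mathrm{con}}(h;\mathcal D)+L^{(k)}_{\mathrm{dis}}(g;h,\mathcal D)+\beta,$$ $$L^{(k)}_{\mathrm{con}}(g;\mathcal D)\ge \alpha L^{(k)}_{\mathrm{con}}(h;\mathcal D)+L^{(k)}_{\mathrm{dis}}(g;h,\mathcal D)+\beta',$$ where $\alpha=\frac{2e^2}{k+e^2}$, $\beta=2-\alpha+\alpha\log\frac{\alpha}{2}$ and $\beta'=-\alpha\log(1+ke^2)-\frac{2ke^2}{1+ke^2}$.
   Context: Let $\mathcal X$ be a measurable input space and $d\ge 1$. An encoder is a measurable map $f:\mathcal X\to\mathbb R^d$ with $\|f(x)\|_2=1$ for all $x$. A task distribution $\mathcal D$ consists of a probability distribution $\mu$ on a countable set of classes together with, for each class $c$, a probability distribution $\mathcal D_c$ on $\mathcal X$. $k$-negative sampling scheme: $c^+,c_1^-,\dots,c_k^-\sim\mu$ independently; given $c^+$, $x,x^+$ are drawn i.i.d. from $\mathcal D_{c^+}$; independently, $x_i^-\sim\mathcal D_{c_i^-}$ for $i=1,\dots,k$. For $\mathbf v\in\mathbb R^k$ let $\ell(\mathbf v)=\log\big(1+\sum_{i=1}^k e^{-v_i}\big)$. The $k$-negative contrastive loss is $L^{(k)}_{\mathrm{con}}(f;\mathcal D)=\mathbb E\big[\ell\big((f(x)^\top(f(x^+)-f(x_i^-)))_{i=1}^k\big)\big]$.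 Let $\mathbf p(f;x,x^+,x_1^-,\dots,x_k^-)=\mathrm{softmax}\big(f(x)^\top f(x^+),f(x)^\top f(x_1^-),\dots,f(x)^\top f(x_k^-)\big)\in\mathbb R^{k+1}$, and for encoders $g,h$ let $L^{(k)}_{\mathrm{dis}}(g;h,\mathcal D)=\mathbb E\big[-\mathbf p(h;x,x^+,x_1^-,\dots,x_k^-)\cdot\log\mathbf p(g;x,x^+,x_1^-,\dots,x_k^-)\big]$ under the same sampling scheme. *)

From HB Require Import structures.
From mathcomp Require Import all_boot all_order all_algebra.
From mathcomp Require Import all_classical all_reals all_analysis.
Set Implicit Arguments. Unset Strict Implicit. Unset Printing Implicit Defensive.
Import Order.TTheory GRing.Theory Num.Theory.
Local Open Scope classical_set_scope.
Local Open Scope ring_scope.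

Section Contrastive.
Variables (R : realType) (dX : measure_display) (X : measurableType dX)
          (C : countType) (d : nat).

Definition dotp (u v : 'rV[R]_d) : R := \sum_(i < d) u 0 i * v 0 i.

(* an encoder: measurable (coordinatewise, i.e. for the Borel product
   sigma-algebra of R^d) with unit Euclidean norm *)
Definition is_encoder (f : X -> 'rV[R]_d) : Prop :=
  (forall i : 'I_d, measurable_fun setT (fun x => f x 0 i)) /\
  (forall x, Num.sqrt (\sum_(i < d) (f x 0 i) ^+ 2) = 1).

Definition ell (v : seq R) : R := ln (1 + \sum_(a <- v) expR (- a)).

Definition con_integrand (f : X -> 'rV[R]_d) (x xp : X) (negs : seq X) : R :=
  ell [seq dotp (f x) (f xp - f y) | y <- negs].

Definition softmax (s : seq R) : seq R :=
  [seq expR a / (\sum_(b <- s) expR b) | a <- s].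

Definition pvec (f : X -> 'rV[R]_d) (x xp : X) (negs : seq X) : seq R :=
  softmax (dotp (f x) (f xp) :: [seq dotp (f x) (f y) | y <- negs]).

Definition dis_integrand (g h : X -> 'rV[R]_d) (x xp : X) (negs : seq X) : R :=
  - \sum_(pq <- zip (pvec h x xp negs) (pvec g x xp negs)) pq.1 * ln pq.2.

Variables (mu : C -> R) (D : C -> probability X R).

(* expectation over the k negatives: c_i^- ~ mu, x_i^- ~ D_{c_i^-}, independent *)
Fixpoint negE (k : nat) (G : seq X -> \bar R) : \bar R :=
  match k with
  | 0 => G [::]
  | k'.+1 => \esum_(c in [set: C]) ((mu c)%:E *
              \int[D c]_y negE k' (fun s => G (y :: s)))%E
  end.

Definition sampleE (k : nat) (F : X -> X -> seq X -> \bar R) : \bar R :=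
  \esum_(c in [set: C]) ((mu c)%:E *
     \int[D c]_x \int[D c]_xp negE k (fun s => F x xp s))%E.

Definition Lcon (k : nat) (f : X -> 'rV[R]_d) : \bar R :=
  sampleE k (fun x xp s => (con_integrand f x xp s)%:E).

Definition Ldis (k : nat) (g h : X -> 'rV[R]_d) : \bar R :=
  sampleE k (fun x xp s => (dis_integrand g h x xp s)%:E).

End Contrastive.

Definition alpha_k (R : realType) (k : nat) : R :=
  2 * expR 2 / (k%:R + expR 2).
Definition beta_k (R : realType) (k : nat) : R :=
  2 - alpha_k R k + alpha_k R k * ln (alpha_k R k / 2).
Definition beta'_k (R : realType) (k : nat) : R :=
  - alpha_k R k * ln (1 + k%:R * expR 2)
  - 2 * k%:R * expR 2 / (1 + k%:R * expR 2).

From HB Require Import structures.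
From mathcomp Require Import all_boot all_order all_algebra.
From mathcomp Require Import all_classical all_reals all_analysis.
From mathcomp Require Import measurable_realfun lra ring.
Import Order.TTheory GRing.Theory Num.Theory.
Local Open Scope classical_set_scope.
Local Open Scope ring_scope.

(* Fix the sample and let q be the softmax weight of the positive under h, and v the
   difference between the h-softmax average of g's scores and g's score of the positive.
   Then con(g) = dis(g; h) + v and con(h) = - ln q, while |v| <= 2 (1 - q) and
   q >= 1 / (1 + k e^2) since scores of unit vectors lie in [-1, 1].  Both bounds are
   therefore elementary estimates of v + alpha ln q, the upper one by concavity of ln.
   They integrate because all integrands are nonnegative and jointly measurable in the
   sample, which makes the iterated expectation monotone and additive. *)

Section countable_esum.
Variables (R : realType) (C : countType).
Local Open Scope ereal_scope.

Lemma esumZl (a : R) (f : C -> \bar R) : (0 <= a)%R -> (forall c, 0 <= f c) ->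
  \esum_(c in [set: C]) (a%:E * f c) = a%:E * \esum_(c in [set: C]) f c.
Proof.
move=> a0 f0; have [->|a_neq0] := eqVneq a 0%R.
  by rewrite mul0e esum1// => c _; rewrite mul0e.
have a_gt0 : (0 < a)%R by rewrite lt_def a_neq0.
rewrite /esum -ereal_sup_pZl//; congr ereal_sup; apply/seteqP; split => x /=.
  move=> [A fA <-]; exists (\sum_(c \in A) f c); first by exists A.
  by rewrite ge0_mule_fsumr.
by move=> [y [A fA <-] <-]; exists A => //; rewrite ge0_mule_fsumr.
Qed.

Lemma esum_pickle (f : C -> \bar R) : (forall c, 0 <= f c) ->
  \esum_(c in [set: C]) f c =
  \sum_(n <oo) (if @pickle_inv C n is Some c then f c else 0).
Proof.
move=> f0; pose g n := if @pickle_inv C n is Some c then f c else 0.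
rewrite -/(g _) nneseries_esumT; last by move=> n; rewrite /g; case: pickle_inv.
rewrite (eq_esum (b := g \o pickle)); last by move=> c _; rewrite /g /= pickleK_inv.
rewrite -(reindex_esum [set: C] (pickle @` [set: C]) pickle g); last first.
  by apply: inj_bij => c c' _ _; exact: (pcan_inj pickleK_inv).
rewrite esum_mkcond; apply: eq_esum => n _; case: ifPn => // /negP nC.
rewrite /g; case En: pickle_inv => [c|//]; exfalso; apply: nC.
by rewrite inE; exists c => //; have := @pickle_invK C n; rewrite En.
Qed.

Lemma measurable_esum dP (P : measurableType dP) (f : C -> P -> \bar R) :
  (forall c p, 0 <= f c p) -> (forall c, measurable_fun setT (f c)) ->
  measurable_fun setT (fun p => \esum_(c in [set: C]) f c p).
Proof.
move=> f0 mf; under eq_fun do rewrite esum_pickle//.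
by apply: ge0_emeasurable_sum => [n p _ _|n _]; case: pickle_inv.
Qed.

End countable_esum.

Section ln_bounds.
Context {R : realType}.
Implicit Types a m q v x : R.

Lemma ln_le_subr1 x : 0 < x -> ln x <= x - 1.
Proof. by move=> x0; have := expR_ge1Dx (ln x); rewrite lnK ?posrE//; lra. Qed.

(* Concavity of ln: the bound is attained at q = a / 2. *)
Lemma addr_mulr_ln_le a q v : 0 < a -> 0 < q -> v <= 2 * (1 - q) ->
  v + a * ln q <= 2 - a + a * ln (a / 2).
Proof.
move=> a0 q0 vq; have a2_gt0 : 0 < a / 2 by rewrite divr_gt0.
have tangent : a * (ln q - ln (a / 2)) <= 2 * q - a.
  rewrite -ln_div ?posrE//; apply: le_trans (_ : a * (q / (a / 2) - 1) <= _).
    by rewrite ler_pM2l// ln_le_subr1// divr_gt0.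
  by rewrite le_eqVlt; apply/orP; left; apply/eqP; field; lra.
by rewrite mulrBr in tangent; lra.
Qed.

Lemma addr_mulr_ln_ge a m q v : 0 <= a -> 0 <= m -> (1 + m)^-1 <= q ->
  - (2 * (1 - q)) <= v -> - a * ln (1 + m) - 2 * m / (1 + m) <= v + a * ln q.
Proof.
move=> a0 m0 mq vq; have m1_gt0 : 0 < 1 + m by lra.
have q0 : 0 < q by apply: lt_le_trans mq; rewrite invr_gt0.
have lnq : - ln (1 + m) <= ln q by rewrite -lnV ?posrE// ler_ln ?posrE ?invr_gt0.
have aq : - a * ln (1 + m) <= a * ln q by rewrite mulNr -mulrN ler_wpM2l.
have -> : 2 * m / (1 + m) = 2 * (1 - (1 + m)^-1) by field; lra.
lra.
Qed.

Lemma ler_sum_size (T : Type) (F : T -> R) (c : R) (L : seq T) :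
  (forall z, F z <= c) -> \sum_(z <- L) F z <= (size L)%:R * c.
Proof.
move=> Fc; elim: L => [|z L IH]; first by rewrite big_nil mul0r.
by rewrite big_cons /= -add1n natrD mulrDl mul1r lerD.
Qed.

Lemma sum_expR_mulr_le (T : Type) (a b : T -> R) (L : seq T) (M : R) : 0 < M ->
  \sum_(z <- L) expR (b z) <= M ->
  \sum_(z <- L) expR (a z) * b z <= (\sum_(z <- L) expR (a z)) * ln M.
Proof.
move=> M0; elim: L => [|z L IH]; first by rewrite !big_nil mul0r.
rewrite !big_cons mulrDl => bM.
have L0 : 0 <= \sum_(y <- L) expR (b y) by apply: sumr_ge0 => y _; exact: expR_ge0.
have bz : b z <= ln M.
  by rewrite -{1}(expRK (b z)) ler_ln ?posrE ?expR_gt0//; lra.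
apply: lerD; first by rewrite ler_pM2l ?expR_gt0.
by apply: IH; have := expR_ge0 (b z); lra.
Qed.

Lemma alpha_k_gt0 k : 0 < alpha_k R k.
Proof. by rewrite divr_gt0 ?mulr_gt0 ?expR_gt0// ltr_wpDl ?expR_gt0. Qed.

Lemma beta_k_ge0 k : 0 <= beta_k R k.
Proof.
have := @addr_mulr_ln_le (alpha_k R k) 1 0 (alpha_k_gt0 k) ltr01.
by rewrite ln1 mulr0 !addr0 subrr mulr0 => ->.
Qed.

Lemma beta'_k_le0 k : beta'_k R k <= 0.
Proof.
have m0 : 0 <= k%:R * expR 2 :> R by rewrite mulr_ge0 ?expR_ge0.
have ln_ge0 : 0 <= ln (1 + k%:R * expR 2 : R) by apply: ln_ge0; rewrite lerDl.
have frac_ge0 : 0 <= 2 * k%:R * expR 2 / (1 + k%:R * expR 2) :> R.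
  by rewrite divr_ge0 ?mulr_ge0 ?expR_ge0// addr_ge0.
have := mulr_ge0 (ltW (alpha_k_gt0 k)) ln_ge0; rewrite /beta'_k; lra.
Qed.

End ln_bounds.

Definition mixture {R : realType} {C : countType} (mu : C -> R) (A : C -> \bar R) :=
  (\esum_(c in [set: C]) ((mu c)%:E * A c))%E.

Section mixture.
Context {R : realType} {C : countType} {mu : C -> R}.
Hypothesis mu_ge0 : forall c, (0 <= mu c)%R.
Local Open Scope ereal_scope.
Implicit Types A B : C -> \bar R.

Lemma mixture_ge0 A : (forall c, 0 <= A c) -> 0 <= mixture mu A.
Proof. by move=> A0; apply: esum_ge0 => c _; apply: mule_ge0; rewrite ?lee_fin. Qed.

Lemma le_mixture A B : (forall c, A c <= B c) -> mixture mu A <= mixture mu B.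
Proof. by move=> AB; apply: le_esum => c _; rewrite lee_wpmul2l ?lee_fin. Qed.

Lemma mixtureD A B : (forall c, 0 <= A c) -> (forall c, 0 <= B c) ->
  mixture mu (fun c => A c + B c) = mixture mu A + mixture mu B.
Proof.
move=> A0 B0; rewrite /mixture -esumD => [|c _|c _]; last 2 first.
- by apply: mule_ge0; rewrite ?lee_fin.
- by apply: mule_ge0; rewrite ?lee_fin.
by apply: eq_esum => c _; rewrite ge0_muleDr.
Qed.

Lemma mixtureZl (a : R) A : (0 <= a)%R -> (forall c, 0 <= A c) ->
  mixture mu (fun c => a%:E * A c) = a%:E * mixture mu A.
Proof.
move=> a0 A0; rewrite /mixture -esumZl// => [|c]; last by apply: mule_ge0; rewrite ?lee_fin.
by apply: eq_esum => c _; rewrite muleCA.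
Qed.

Hypothesis mu_sum1 : \esum_(c in [set: C]) (mu c)%:E = 1.

Lemma mixture_cst (r : R) : (0 <= r)%R -> mixture mu (fun _ => r%:E) = r%:E.
Proof.
move=> r0; rewrite /mixture (eq_esum (b := fun c => r%:E * (mu c)%:E)).
  by rewrite esumZl// ?mu_sum1 ?mule1// => c; rewrite lee_fin.
by move=> c _; rewrite muleC.
Qed.

End mixture.

Section negE.
Context {R : realType} {dX : measure_display} {X : measurableType dX}.
Local Open Scope ereal_scope.

(* [jointly_measurable k G] states that (p, y_1, ..., y_k) |-> G p [:: y_1; ...; y_k]
   is measurable on ((P * X) * ...) * X. *)
Fixpoint jointly_measurable (k : nat) dP (P : measurableType dP)
    (G : P -> seq X -> \bar R) : Prop :=
  if k is k'.+1 then jointly_measurable k' _ _ (fun (q : P * X) s => G q.1 (q.2 :: s))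
  else measurable_fun setT (fun p => G p [::]).
Arguments jointly_measurable k {dP P}.

Lemma jointly_measurableD k dP (P : measurableType dP) (G1 G2 : P -> seq X -> \bar R) :
  jointly_measurable k G1 -> jointly_measurable k G2 ->
  jointly_measurable k (fun p s => G1 p s + G2 p s).
Proof.
elim: k dP P G1 G2 => [|k IH] dP P G1 G2 /=; first exact: emeasurable_funD.
exact: IH.
Qed.

Lemma jointly_measurableZl k dP (P : measurableType dP) (a : R) (G : P -> seq X -> \bar R) :
  jointly_measurable k G -> jointly_measurable k (fun p s => a%:E * G p s).
Proof.
elim: k dP P G => [|k IH] dP P G /=; last exact: IH.
by apply: emeasurable_funM; exact: measurable_cst.
Qed.

Lemma jointly_measurable_cst k dP (P : measurableType dP) (r : \bar R) :
  jointly_measurable k (fun (_ : P) _ => r).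
Proof. by elim: k dP P => [|k IH] dP P //=; exact: measurable_cst. Qed.

Definition preserves_measurability (T : (nat -> R) -> R) :=
  forall dP (P : measurableType dP) (a : nat -> P -> R),
  (forall i, measurable_fun setT (a i)) -> measurable_fun setT (fun p => T (fun i => a i p)).

Lemma jointly_measurable_stat k dP (P : measurableType dP) (T : (nat -> R) -> R)
    (c : nat -> P -> R) (phi : nat -> P * X -> R) :
  preserves_measurability T ->
  (forall i, measurable_fun setT (c i)) -> (forall i, measurable_fun setT (phi i)) ->
  jointly_measurable k (fun p s => (T (fun i => c i p + \sum_(y <- s) phi i (p, y))%R)%:E).
Proof.
move=> hT; elim: k dP P c phi => [|k IH] dP P c phi mc mphi /=.
  apply/measurable_EFinP; have -> : (fun p => T (fun i => c i p + \sum_(y <- [::]) phi i (p, y))%R)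
      = (fun p => T (fun i => c i p)).
    by apply/funext => p; congr T; apply/funext => i; rewrite big_nil addr0.
  exact: hT.
have -> : (fun (q : P * X) s => (T (fun i => c i q.1 + \sum_(y <- q.2 :: s) phi i (q.1, y))%R)%:E)
    = (fun q s => (T (fun i => (c i q.1 + phi i q) + \sum_(y <- s) phi i (q.1, y))%R)%:E).
  apply/funext => -[p y]; apply/funext => s; congr (_%:E); congr T; apply/funext => i.
  by rewrite big_cons addrA.
apply: (IH _ _ (fun i q => c i q.1 + phi i q)%R (fun i qy => phi i (qy.1.1, qy.2))) => i.
  exact: measurable_funD (measurableT_comp (mc i) measurable_fst) (mphi i).
apply: measurableT_comp (mphi i) (measurable_fun_pair _ measurable_snd).
exact: measurableT_comp measurable_fst measurable_fst.
Qed.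

Context {C : countType} {mu : C -> R} {D : C -> probability X R}.
Hypothesis mu_ge0 : forall c, (0 <= mu c)%R.
Notation NE := (negE mu D).

Lemma negES k G :
  NE k.+1 G = mixture mu (fun c => \int[D c]_y NE k (fun s => G (y :: s))).
Proof. by []. Qed.

Lemma negE_ge0 k G : (forall s, 0 <= G s) -> 0 <= NE k G.
Proof.
elim: k G => [|k IH] G G0; first exact: G0.
rewrite negES; apply: (mixture_ge0 mu_ge0) => c.
by apply: integral_ge0 => y _; exact: IH.
Qed.

Lemma measurable_negE k dP (P : measurableType dP) (G : P -> seq X -> \bar R) :
  (forall p s, 0 <= G p s) -> jointly_measurable k G ->
  measurable_fun setT (fun p => NE k (G p)).
Proof.
elim: k dP P G => [|k IH] dP P G G0 mG //.
apply: measurable_esum => [c p|c].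
  by apply: mule_ge0; rewrite ?lee_fin//; apply: integral_ge0 => y _; exact: negE_ge0.
apply: emeasurable_funM; first exact: measurable_cst.
apply: (measurable_fun_fubini_tonelli_F (fun q => NE k (fun s => G q.1 (q.2 :: s)))).
  by apply: IH mG => q s; exact: G0.
by move=> q; apply: negE_ge0.
Qed.

Lemma measurable_negE_cons k dP (P : measurableType dP) (G : P -> seq X -> \bar R) p :
  (forall p s, 0 <= G p s) -> jointly_measurable k.+1 G ->
  measurable_fun setT (fun y => NE k (fun s => G p (y :: s))).
Proof.
move=> G0 mG; apply: (measurable_fun_pair2 (f := fun q => NE k (fun s => G q.1 (q.2 :: s)))).
exact: (@measurable_negE k _ _ (fun q s => G q.1 (q.2 :: s)) (fun q s => G0 _ _) mG).
Qed.

Lemma negE_le k dP (P : measurableType dP) (G1 G2 : P -> seq X -> \bar R) p :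
  (forall p s, 0 <= G1 p s) -> (forall p s, 0 <= G2 p s) ->
  jointly_measurable k G1 -> jointly_measurable k G2 ->
  (forall s, size s = k -> G1 p s <= G2 p s) -> NE k (G1 p) <= NE k (G2 p).
Proof.
elim: k dP P G1 G2 p => [|k IH] dP P G1 G2 p G10 G20 mG1 mG2 G12; first exact: G12.
rewrite !negES; apply: (le_mixture mu_ge0) => c; apply: ge0_le_integral => //.
- by move=> y _; exact: negE_ge0.
- exact: measurable_negE_cons.
- exact: measurable_negE_cons.
move=> y _; apply: (IH _ _ (fun q s => G1 q.1 (q.2 :: s))
  (fun q s => G2 q.1 (q.2 :: s)) (p, y)) => // s sk.
by apply: G12; rewrite /= sk.
Qed.

Lemma negED k dP (P : measurableType dP) (G1 G2 : P -> seq X -> \bar R) p :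
  (forall p s, 0 <= G1 p s) -> (forall p s, 0 <= G2 p s) ->
  jointly_measurable k G1 -> jointly_measurable k G2 ->
  NE k (fun s => G1 p s + G2 p s) = NE k (G1 p) + NE k (G2 p).
Proof.
elim: k dP P G1 G2 p => [|k IH] dP P G1 G2 p G10 G20 mG1 mG2 //.
rewrite !negES -(mixtureD mu_ge0) => [|c|c]; last 2 first.
- by apply: integral_ge0 => y _; exact: negE_ge0.
- by apply: integral_ge0 => y _; exact: negE_ge0.
congr (mixture _ _); apply/funext => c; rewrite -ge0_integralD//; last 4 first.
- by move=> y _; exact: negE_ge0.
- exact: measurable_negE_cons.
- by move=> y _; exact: negE_ge0.
- exact: measurable_negE_cons.
apply: eq_integral => y _; apply: (IH _ _ (fun q s => G1 q.1 (q.2 :: s))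
  (fun q s => G2 q.1 (q.2 :: s)) (p, y)) => //.
Qed.

Lemma negEZl k dP (P : measurableType dP) (a : R) (G : P -> seq X -> \bar R) p :
  (0 <= a)%R -> (forall p s, 0 <= G p s) -> jointly_measurable k G ->
  NE k (fun s => a%:E * G p s) = a%:E * NE k (G p).
Proof.
move=> a0; elim: k dP P G p => [|k IH] dP P G p G0 mG //.
rewrite !negES -(mixtureZl mu_ge0)// => [|c]; last first.
  by apply: integral_ge0 => y _; exact: negE_ge0.
congr (mixture _ _); apply/funext => c; rewrite -ge0_integralZl_EFin//; last 2 first.
- by move=> y _; exact: negE_ge0.
- exact: measurable_negE_cons.
apply: eq_integral => y _.
exact: (IH _ _ (fun q s => G q.1 (q.2 :: s)) (p, y)).
Qed.

Hypothesis mu_sum1 : \esum_(c in [set: C]) (mu c)%:E = 1.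

Lemma negE_cst k (r : R) : (0 <= r)%R -> NE k (fun _ => r%:E) = r%:E.
Proof.
move=> r0; elim: k => [|k IH] //; rewrite negES -[RHS](mixture_cst mu_ge0 mu_sum1 _ r0).
congr (mixture _ _); apply/funext => c; under eq_integral do rewrite IH.
by rewrite integral_cst// [X in _ * X]probability_setT mule1.
Qed.

End negE.
Arguments jointly_measurable {R dX X} k {dP P} G.

Section sampleE.
Context {R : realType} {dX : measure_display} {X : measurableType dX}.
Context {C : countType} {mu : C -> R} {D : C -> probability X R}.
Hypothesis mu_ge0 : forall c, (0 <= mu c)%R.
Local Open Scope ereal_scope.
Notation NE := (negE mu D).
Notation SE := (sampleE mu D).
Implicit Types F G : X -> X -> seq X -> \bar R.

Lemma sampleEE k F :
  SE k F = mixture mu (fun c => \int[D c]_x \int[D c]_xp NE k (F x xp)).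
Proof. by []. Qed.

Section measurability.
Variables (k : nat) (F : X -> X -> seq X -> \bar R).
Hypothesis F0 : forall x xp s, 0 <= F x xp s.
Hypothesis mF : jointly_measurable k (fun q : X * X => F q.1 q.2).

Lemma measurable_negE_pair x : measurable_fun setT (fun xp => NE k (F x xp)).
Proof.
apply: (measurable_fun_pair2 (f := fun q => NE k (F q.1 q.2))).
by apply: (measurable_negE mu_ge0) mF => q s; exact: F0.
Qed.

Lemma measurable_integral_negE c :
  measurable_fun setT (fun x => \int[D c]_xp NE k (F x xp)).
Proof.
apply: (measurable_fun_fubini_tonelli_F (fun q => NE k (F q.1 q.2))).
  by apply: (measurable_negE mu_ge0) mF => q s; exact: F0.
by move=> q; apply: (negE_ge0 mu_ge0) => s; exact: F0.
Qed.

Lemma integral_negE_ge0 c x : 0 <= \int[D c]_xp NE k (F x xp).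
Proof. by apply: integral_ge0 => xp _; apply: (negE_ge0 mu_ge0) => s; exact: F0. Qed.

End measurability.

Lemma sampleE_le k F G :
  (forall x xp s, 0 <= F x xp s) -> (forall x xp s, 0 <= G x xp s) ->
  jointly_measurable k (fun q : X * X => F q.1 q.2) ->
  jointly_measurable k (fun q : X * X => G q.1 q.2) ->
  (forall x xp s, size s = k -> F x xp s <= G x xp s) -> SE k F <= SE k G.
Proof.
move=> F0 G0 mF mG FG; apply: (le_mixture mu_ge0) => c.
apply: ge0_le_integral => //.
- by move=> x _; exact: integral_negE_ge0.
- exact: measurable_integral_negE.
- exact: measurable_integral_negE.
move=> x _; apply: ge0_le_integral => //.
- by move=> xp _; apply: (negE_ge0 mu_ge0) => s; exact: F0.
- exact: measurable_negE_pair.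
- exact: measurable_negE_pair.
move=> xp _; apply: (negE_le mu_ge0 _ _ _ (fun q : X * X => F q.1 q.2)
  (fun q => G q.1 q.2) (x, xp)) => //.
exact: FG.
Qed.

Lemma sampleED k F G :
  (forall x xp s, 0 <= F x xp s) -> (forall x xp s, 0 <= G x xp s) ->
  jointly_measurable k (fun q : X * X => F q.1 q.2) ->
  jointly_measurable k (fun q : X * X => G q.1 q.2) ->
  SE k (fun x xp s => F x xp s + G x xp s) = SE k F + SE k G.
Proof.
move=> F0 G0 mF mG; rewrite !sampleEE -(mixtureD mu_ge0); last 2 first.
- by move=> c; apply: integral_ge0 => x _; exact: integral_negE_ge0.
- by move=> c; apply: integral_ge0 => x _; exact: integral_negE_ge0.
congr (mixture _ _); apply/funext => c; rewrite -ge0_integralD//; last 4 first.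
- by move=> x _; exact: integral_negE_ge0.
- exact: measurable_integral_negE.
- by move=> x _; exact: integral_negE_ge0.
- exact: measurable_integral_negE.
apply: eq_integral => x _; rewrite -ge0_integralD//; last 4 first.
- by move=> xp _; apply: (negE_ge0 mu_ge0) => s; exact: F0.
- exact: measurable_negE_pair.
- by move=> xp _; apply: (negE_ge0 mu_ge0) => s; exact: G0.
- exact: measurable_negE_pair.
apply: eq_integral => xp _.
exact: (negED mu_ge0 _ _ _ (fun q : X * X => F q.1 q.2) (fun q => G q.1 q.2) (x, xp)).
Qed.

Lemma sampleEZl k (a : R) F : (0 <= a)%R ->
  (forall x xp s, 0 <= F x xp s) -> jointly_measurable k (fun q : X * X => F q.1 q.2) ->
  SE k (fun x xp s => a%:E * F x xp s) = a%:E * SE k F.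
Proof.
move=> a0 F0 mF; rewrite !sampleEE -(mixtureZl mu_ge0)//; last first.
  by move=> c; apply: integral_ge0 => x _; exact: integral_negE_ge0.
congr (mixture _ _); apply/funext => c; rewrite -ge0_integralZl_EFin//; last 2 first.
- by move=> x _; exact: integral_negE_ge0.
- exact: measurable_integral_negE.
apply: eq_integral => x _; rewrite -ge0_integralZl_EFin//; last 2 first.
- by move=> xp _; apply: (negE_ge0 mu_ge0) => s; exact: F0.
- exact: measurable_negE_pair.
apply: eq_integral => xp _.
exact: (negEZl mu_ge0 _ _ _ _ (fun q : X * X => F q.1 q.2) (x, xp)).
Qed.

Hypothesis mu_sum1 : \esum_(c in [set: C]) (mu c)%:E = 1.

Lemma sampleE_cst k (r : R) : (0 <= r)%R -> SE k (fun _ _ _ => r%:E) = r%:E.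
Proof.
move=> r0; rewrite sampleEE -[RHS](mixture_cst mu_ge0 mu_sum1 _ r0).
congr (mixture _ _); apply/funext => c.
under eq_integral do under eq_integral do rewrite (negE_cst mu_ge0 mu_sum1 _ _ r0).
have int_cst : \int[D c]_x r%:E = r%:E.
  by rewrite integral_cst// [X in _ * X]probability_setT mule1.
by under eq_integral do rewrite int_cst; rewrite int_cst.
Qed.

Lemma sampleEDr k F (r : R) : (0 <= r)%R ->
  (forall x xp s, 0 <= F x xp s) -> jointly_measurable k (fun q : X * X => F q.1 q.2) ->
  SE k (fun x xp s => F x xp s + r%:E) = SE k F + r%:E.
Proof.
move=> r0 F0 mF; rewrite sampleED// ?sampleE_cst//.
exact: jointly_measurable_cst.
Qed.

Section affine_bounds.
Variables (k : nat) (a : R) (F G1 G2 : X -> X -> seq X -> \bar R).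
Hypothesis a0 : (0 <= a)%R.
Hypotheses (F0 : forall x xp s, 0 <= F x xp s) (G10 : forall x xp s, 0 <= G1 x xp s)
  (G20 : forall x xp s, 0 <= G2 x xp s).
Hypotheses (mF : jointly_measurable k (fun q : X * X => F q.1 q.2))
  (mG1 : jointly_measurable k (fun q : X * X => G1 q.1 q.2))
  (mG2 : jointly_measurable k (fun q : X * X => G2 q.1 q.2)).

Let H x xp s := a%:E * G1 x xp s + G2 x xp s.

Let H0 x xp s : 0 <= H x xp s.
Proof. by rewrite adde_ge0 ?mule_ge0 ?lee_fin. Qed.

Let mH : jointly_measurable k (fun q : X * X => H q.1 q.2).
Proof. by apply: jointly_measurableD => //; exact: jointly_measurableZl. Qed.

Let SEH : SE k H = a%:E * SE k G1 + SE k G2.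
Proof.
rewrite sampleED ?sampleEZl//; last exact: jointly_measurableZl.
by move=> x xp s; rewrite mule_ge0 ?lee_fin.
Qed.

Lemma sampleE_le_affine (b : R) : (0 <= b)%R ->
  (forall x xp s, size s = k -> F x xp s <= a%:E * G1 x xp s + G2 x xp s + b%:E) ->
  SE k F <= a%:E * SE k G1 + SE k G2 + b%:E.
Proof.
move=> b0 FH; rewrite -SEH -(sampleEDr k H b b0 H0 mH); apply: sampleE_le => //.
- by move=> x xp s; rewrite adde_ge0 ?H0 ?lee_fin.
- by apply: jointly_measurableD => //; exact: jointly_measurable_cst.
Qed.

Lemma sampleE_ge_affine (b : R) : (b <= 0)%R ->
  (forall x xp s, size s = k -> a%:E * G1 x xp s + G2 x xp s + b%:E <= F x xp s) ->
  a%:E * SE k G1 + SE k G2 + b%:E <= SE k F.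
Proof.
move=> b0 HF; have b'0 : (0 <= - b)%R by rewrite oppr_ge0.
rewrite -SEH -[b]opprK EFinN leeBlDr// -(sampleEDr k F (- b) b'0 F0 mF).
apply: sampleE_le => //.
- by move=> x xp s; rewrite adde_ge0 ?lee_fin ?oppr_ge0.
- by apply: jointly_measurableD => //; exact: jointly_measurable_cst.
by move=> x xp s sk; rewrite -leeBlDr// EFinN oppeK; exact: HF.
Qed.

End affine_bounds.

End sampleE.

Section encoder.
Context {R : realType} {dX : measure_display} {X : measurableType dX} {d : nat}.
Implicit Types (f g h : X -> 'rV[R]_d) (x xp y : X) (s L : seq X).

Lemma dotpB (u v w : 'rV[R]_d) : dotp u (v - w) = dotp u v - dotp u w.
Proof. by rewrite /dotp -sumrB; apply: eq_bigr => i _; rewrite !mxE mulrBr. Qed.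

Lemma dotp_unit_bound (u v : 'rV[R]_d) : dotp u u = 1 -> dotp v v = 1 ->
  -1 <= dotp u v <= 1.
Proof.
rewrite /dotp => uu vv.
have sqD : 0 <= \sum_(i < d) (u 0 i + v 0 i) ^+ 2 by apply: sumr_ge0 => i _; exact: sqr_ge0.
have sqB : 0 <= \sum_(i < d) (u 0 i - v 0 i) ^+ 2 by apply: sumr_ge0 => i _; exact: sqr_ge0.
have sqDE : \sum_(i < d) (u 0 i + v 0 i) ^+ 2 =
    \sum_(i < d) u 0 i * u 0 i + \sum_(i < d) v 0 i * v 0 i + 2 * \sum_(i < d) u 0 i * v 0 i.
  by rewrite mulr_sumr -!big_split; apply: eq_bigr => i _ /=; ring.
have sqBE : \sum_(i < d) (u 0 i - v 0 i) ^+ 2 =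
    \sum_(i < d) u 0 i * u 0 i + \sum_(i < d) v 0 i * v 0 i - 2 * \sum_(i < d) u 0 i * v 0 i.
  by rewrite mulr_sumr -big_split -sumrB; apply: eq_bigr => i _ /=; ring.
by rewrite sqDE uu vv in sqD; rewrite sqBE uu vv in sqB; apply/andP; split; lra.
Qed.

Lemma encoder_dotpp f x : is_encoder f -> dotp (f x) (f x) = 1.
Proof.
move=> [_ /(_ x) unit_f]; rewrite /dotp -[RHS](expr1n _ 2) -unit_f sqr_sqrtr.
  by apply: eq_bigr => i _; rewrite expr2.
by apply: sumr_ge0 => i _; exact: sqr_ge0.
Qed.

Definition score f x y : R := dotp (f x) (f y).

Lemma score_bound f x y : is_encoder f -> -1 <= score f x y <= 1.
Proof. by move=> ef; apply: dotp_unit_bound; exact: encoder_dotpp. Qed.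

Lemma measurable_score f : is_encoder f ->
  measurable_fun setT (fun q : X * X => score f q.1 q.2).
Proof.
move=> [mf _]; apply: measurable_sum => i; apply: measurable_funM.
  exact: measurableT_comp (mf i) measurable_fst.
exact: measurableT_comp (mf i) measurable_snd.
Qed.

Definition normalizer f x L : R := \sum_(z <- L) expR (score f x z).

Definition mean_score g h x L : R :=
  (\sum_(z <- L) expR (score h x z) * score g x z) / normalizer h x L.

Lemma normalizer_cons f x y L :
  normalizer f x (y :: L) = expR (score f x y) + normalizer f x L.
Proof. exact: big_cons. Qed.

Lemma normalizer_ge0 f x L : 0 <= normalizer f x L.
Proof. by apply: sumr_ge0 => z _; exact: expR_ge0. Qed.

Lemma normalizer_cons_gt0 f x y L : 0 < normalizer f x (y :: L).
Proof. by rewrite normalizer_cons ltr_pwDl ?expR_gt0 ?normalizer_ge0. Qed.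

Lemma con_integrandE f x xp s :
  con_integrand f x xp s = ln (normalizer f x (xp :: s)) - score f x xp.
Proof.
rewrite /con_integrand /ell big_map normalizer_cons.
under eq_bigr do rewrite dotpB opprB expRD.
rewrite -mulr_suml -[X in ln (1 + X)]/(normalizer f x s * _).
have -> : 1 + normalizer f x s * expR (- score f x xp) =
    (expR (score f x xp) + normalizer f x s) * expR (- score f x xp).
  by rewrite mulrDl -expRD subrr expR0.
rewrite lnM ?expRK ?posrE ?expR_gt0//.
by rewrite -normalizer_cons normalizer_cons_gt0.
Qed.

Lemma dis_integrandE g h x xp s :
  dis_integrand g h x xp s = ln (normalizer g x (xp :: s)) - mean_score g h x (xp :: s).
Proof.
have pvecE f : pvec f x xp s =
    [seq expR (score f x z) / normalizer f x (xp :: s) | z <- xp :: s].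
  rewrite /pvec /softmax (_ : _ :: _ = [seq score f x z | z <- xp :: s])//.
  by rewrite -map_comp big_map.
rewrite /dis_integrand !pvecE zip_map big_map /mean_score.
have Zh0 := normalizer_cons_gt0 h x xp s; have Zg0 := normalizer_cons_gt0 g x xp s.
under eq_bigr do rewrite /= ln_div ?expRK ?posrE ?expR_gt0//.
rewrite -sumrN [X in X - _](_ : _ = \sum_(z <- xp :: s)
    expR (score h x z) / normalizer h x (xp :: s) * ln (normalizer g x (xp :: s))).
  by rewrite mulr_suml -sumrB; apply: eq_bigr => z _; ring.
by rewrite -!mulr_suml mulfV ?mul1r// lt0r_neq0.
Qed.

End encoder.

Section integrands.
Context {R : realType} {dX : measure_display} {X : measurableType dX} {d : nat}.
Implicit Types (f g h : X -> 'rV[R]_d) (x xp : X) (s : seq X).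

Lemma con_integrand_ge0 f x xp s : 0 <= con_integrand f x xp s.
Proof.
rewrite con_integrandE subr_ge0 -{1}(expRK (score f x xp)).
rewrite ler_ln ?posrE ?expR_gt0 ?normalizer_cons_gt0//.
by rewrite normalizer_cons lerDl normalizer_ge0.
Qed.

Lemma dis_integrand_ge0 g h x xp s : 0 <= dis_integrand g h x xp s.
Proof.
rewrite dis_integrandE subr_ge0 /mean_score ler_pdivrMr ?normalizer_cons_gt0// mulrC.
exact: sum_expR_mulr_le (normalizer_cons_gt0 g x xp s) (lexx _).
Qed.

Lemma mean_score_gap g h x xp s : is_encoder g ->
  `|mean_score g h x (xp :: s) - score g x xp| <=
  2 * (1 - expR (score h x xp) / normalizer h x (xp :: s)).
Proof.
move=> eg; have Z0 := normalizer_cons_gt0 h x xp s.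
have -> : mean_score g h x (xp :: s) - score g x xp =
    (\sum_(y <- s) expR (score h x y) * (score g x y - score g x xp)) /
    normalizer h x (xp :: s).
  have -> : \sum_(y <- s) expR (score h x y) * (score g x y - score g x xp) =
      \sum_(y <- s) expR (score h x y) * score g x y - normalizer h x s * score g x xp.
    by rewrite mulr_suml -sumrB; apply: eq_bigr => y _; ring.
  move: Z0; rewrite /mean_score big_cons normalizer_cons => Z0; field; lra.
have -> : 2 * (1 - expR (score h x xp) / normalizer h x (xp :: s)) =
    2 * normalizer h x s / normalizer h x (xp :: s).
  by move: Z0; rewrite normalizer_cons => Z0; field; lra.
rewrite normrM normfV (gtr0_norm Z0) ler_pM2r ?invr_gt0//.
apply: le_trans (ler_norm_sum _ _ _) _; rewrite /normalizer mulr_sumr.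
apply: ler_sum => y _; rewrite normrM ger0_norm ?expR_ge0// mulrC.
rewrite ler_wpM2r ?expR_ge0// ler_norml.
by have /andP[] := score_bound g x y eg; have /andP[] := score_bound g x xp eg; lra.
Qed.

(* Scores lie in [-1, 1], so the positive's weight is at least e^-1 / (e^-1 + k e). *)
Lemma softmax_head_ge f x xp s : is_encoder f ->
  (1 + (size s)%:R * expR 2)^-1 <= expR (score f x xp) / normalizer f x (xp :: s).
Proof.
move=> ef; have Z0 := normalizer_cons_gt0 f x xp s.
have N_le : normalizer f x s <= (size s)%:R * expR 1.
  by apply: ler_sum_size => y; rewrite ler_expR; have /andP[] := score_bound f x y ef.
have e0_ge : expR (-1) <= expR (score f x xp).
  by rewrite ler_expR; have /andP[] := score_bound f x xp ef.
have m0 : 0 <= (size s)%:R * expR 2 :> R by rewrite mulr_ge0 ?expR_ge0.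
have em : expR (-1) * ((size s)%:R * expR 2) = (size s)%:R * expR 1 :> R.
  by rewrite mulrCA -expRD (_ : -1 + 2 = 1 :> R)//; lra.
have := ler_wpM2r m0 e0_ge; rewrite em => Nm.
rewrite ler_pdivlMr// mulrC ler_pdivrMr; last by lra.
by rewrite normalizer_cons; lra.
Qed.

Lemma con_integrand_bounds g h x xp s : is_encoder g -> is_encoder h ->
  con_integrand g x xp s <= alpha_k R (size s) * con_integrand h x xp s +
    dis_integrand g h x xp s + beta_k R (size s) /\
  alpha_k R (size s) * con_integrand h x xp s + dis_integrand g h x xp s +
    beta'_k R (size s) <= con_integrand g x xp s.
Proof.
move=> eg eh; set a := alpha_k R (size s).
set q := expR (score h x xp) / normalizer h x (xp :: s).
set v := mean_score g h x (xp :: s) - score g x xp.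
have q_gt0 : 0 < q by rewrite divr_gt0 ?expR_gt0 ?normalizer_cons_gt0.
have con_h : con_integrand h x xp s = - ln q.
  by rewrite con_integrandE /q ln_div ?posrE ?expR_gt0 ?normalizer_cons_gt0// expRK opprB.
have con_g : con_integrand g x xp s = dis_integrand g h x xp s + v.
  by rewrite con_integrandE dis_integrandE /v; ring.
have /andP[v_ge v_le] : - (2 * (1 - q)) <= v <= 2 * (1 - q).
  by rewrite -ler_norml; exact: mean_score_gap.
have upper : v + a * ln q <= 2 - a + a * ln (a / 2).
  by apply: addr_mulr_ln_le => //; exact: alpha_k_gt0.
pose m : R := (size s)%:R * expR 2.
have lower : - a * ln (1 + m) - 2 * m / (1 + m) <= v + a * ln q.
  apply: addr_mulr_ln_ge => //; first exact/ltW/alpha_k_gt0.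
    by rewrite mulr_ge0 ?expR_ge0.
  exact: softmax_head_ge.
rewrite con_g con_h mulrN /beta_k /beta'_k -/a -[2 * _ * expR 2]mulrA -/m.
by split; lra.
Qed.

Lemma measurable_expR_score f : is_encoder f ->
  measurable_fun setT (fun q : X * X => expR (score f q.1 q.2)).
Proof. by move=> ef; apply: measurableT_comp; [exact: measurable_expR|exact: measurable_score]. Qed.

Lemma measurable_fun_skip (F : X * X -> R) : measurable_fun setT F ->
  measurable_fun setT (fun qy : (X * X) * X => F (qy.1.1, qy.2)).
Proof.
move=> mF; apply: measurableT_comp mF _.
exact: measurable_fun_pair (measurableT_comp measurable_fst measurable_fst) measurable_snd.
Qed.

Lemma jointly_measurable_con k f : is_encoder f ->
  jointly_measurable k (fun q : X * X => fun s => (con_integrand f q.1 q.2 s)%:E).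
Proof.
move=> ef.
pose c i (q : X * X) := if i is 0 then score f q.1 q.2 else expR (score f q.1 q.2).
pose phi i (qy : (X * X) * X) := if i is 0 then 0 else expR (score f qy.1.1 qy.2).
have -> : (fun (q : X * X) s => (con_integrand f q.1 q.2 s)%:E) = (fun q s =>
    ((fun v => ln (v 1%N) - v 0%N) (fun i => c i q + \sum_(y <- s) phi i (q, y)))%:E).
  apply/funext => q; apply/funext => s.
  by rewrite con_integrandE /= big1_eq addr0 normalizer_cons.
apply: (jointly_measurable_stat _ _ _ (fun v => ln (v 1%N) - v 0%N) c phi)
  => [dP P v mv /=|i|i].
- apply: measurable_funB (mv 0%N).
  by apply: measurableT_comp (mv 1%N); exact: measurable_ln.
- by rewrite /c; case: i => [|i]; [exact: measurable_score|exact: measurable_expR_score].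
- rewrite /phi; case: i => [|i] /=; first exact: measurable_cst.
  exact: measurable_fun_skip (measurable_expR_score _ ef).
Qed.

Lemma jointly_measurable_dis k g h : is_encoder g -> is_encoder h ->
  jointly_measurable k (fun q : X * X => fun s => (dis_integrand g h q.1 q.2 s)%:E).
Proof.
move=> eg eh.
pose stat i x y := match i with
  | 0 => expR (score h x y) | 1 => expR (score g x y)
  | _ => expR (score h x y) * score g x y end.
(* Division by the normalizer is written [expR (- ln _)], whose measurability is known. *)
have -> : (fun (q : X * X) s => (dis_integrand g h q.1 q.2 s)%:E) = (fun q s =>
    ((fun v => ln (v 1%N) - v 2%N * expR (- ln (v 0%N)))
     (fun i => stat i q.1 q.2 + \sum_(y <- s) stat i q.1 y))%:E).
  apply/funext => q; apply/funext => s; rewrite dis_integrandE /=.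
  rewrite expRN lnK ?posrE; last by rewrite -normalizer_cons normalizer_cons_gt0.
  by rewrite /mean_score big_cons !normalizer_cons.
have mstat i : measurable_fun setT (fun q : X * X => stat i q.1 q.2).
  case: i => [|[|i]]; [exact: measurable_expR_score|exact: measurable_expR_score|].
  exact: measurable_funM (measurable_expR_score _ eh) (measurable_score _ eg).
apply: (jointly_measurable_stat _ _ _ (fun v => ln (v 1%N) - v 2%N * expR (- ln (v 0%N)))
  (fun i q => stat i q.1 q.2) (fun i qy => stat i qy.1.1 qy.2)) => [dP P v mv /=|i|i]; last first.
- exact: measurable_fun_skip (mstat i).
- exact: mstat.
apply: measurable_funB.
  by apply: measurableT_comp (mv 1%N); exact: measurable_ln.
apply: measurable_funM (mv 2%N) _; apply: measurableT_comp; first exact: measurable_expR.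
by apply: measurable_funN; apply: measurableT_comp (mv 0%N); exact: measurable_ln.
Qed.

End integrands.

Theorem mainTheorem5 (R : realType) (dX : measure_display) (X : measurableType dX)
  (C : countType) (d : nat) (hd : (0 < d)%N)
  (mu : C -> R) (D : C -> probability X R)
  (mu_ge0 : forall c, 0 <= mu c)
  (mu_sum1 : (\esum_(c in [set: C]) (mu c)%:E = 1)%E)
  (k : nat) (hk : (1 <= k)%N)
  (g h : X -> 'rV[R]_d) (hg : is_encoder g) (hh : is_encoder h) :
  (Lcon mu D k g <= (alpha_k R k)%:E * Lcon mu D k h + Ldis mu D k g h
                      + (beta_k R k)%:E)%E /\
  (Lcon mu D k g >= (alpha_k R k)%:E * Lcon mu D k h + Ldis mu D k g h
                      + (beta'_k R k)%:E)%E.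
Proof.
have a0 := ltW (alpha_k_gt0 (R := R) k).
have con0 (f : X -> 'rV[R]_d) x xp s : (0 <= (con_integrand f x xp s)%:E)%E.
  by rewrite lee_fin con_integrand_ge0.
have dis0 x xp s : (0 <= (dis_integrand g h x xp s)%:E)%E.
  by rewrite lee_fin dis_integrand_ge0.
have [mg mh] := (jointly_measurable_con k g hg, jointly_measurable_con k h hh).
have mgh := jointly_measurable_dis k g h hg hh.
split.
- apply: (sampleE_le_affine mu_ge0 mu_sum1 _ _ _ _ _ a0 (con0 g) (con0 h) dis0 mg mh mgh _
    (beta_k_ge0 k)) => x xp s sk.
  by rewrite -!EFinM -!EFinD lee_fin -sk; case: (con_integrand_bounds g h x xp s hg hh).
- apply: (sampleE_ge_affine mu_ge0 mu_sum1 _ _ _ _ _ a0 (con0 g) (con0 h) dis0 mg mh mgh _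
    (beta'_k_le0 k)) => x xp s sk.
  by rewrite -!EFinM -!EFinD lee_fin -sk; case: (con_integrand_bounds g h x xp s hg hh).
Qed.
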